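(* Let $G$ be a finite graph (multiple edges and self-loops allowed) with $I$ edges, $V$ vertices and $c$ connected components, and let $L=I-V+c$. Then there exist an orientation of the edges of $G$ and $L$ simple cycles $\gamma_1,\ldots,\gamma_L$ of $G$ with the following properties: - each $\gamma_j$ is a directed (oriented) cycle with respect to this orientation; - the edge-indicator vectors of $\gamma_1,\dots,\gamma_L$ in $\mathbb{R}^I$ are linearly independent. Consequently, assigning to each edge $\ell_i$ the ''energy'' $E_i=\sum_{j=1}^L a_{ij}e_j$ with $a_{ij}=1$ if $\ell_i\in\gamma_j$ and $a_{ij}=0$ otherwise, where $e_1,\dots,e_L$ are free real parameters (loop energies), gives the following parametrization. Every energy flow conserved at each vertex (total energy flowing in equals total energy flowing out, with zero external energies) is of this form. In this parametrization each leg's energy is a linear combination of $e_1,\dots,e_L$ with coefficients $0$ or $1$, and the flow of each $e_j$ runs along the oriented minimal loop $\gamma_j$.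
   Context: A simple cycle in a graph is a closed sequence of distinct edges through distinct vertices; a self-loop is a simple cycle of length one. A cycle is directed (oriented) with respect to an orientation of the edges if all its edges have coherent orientations along the cycle: at each shared vertex, one edge points into the vertex and the next points out of it. *)

From HB Require Import structures.
From mathcomp Require Import all_boot all_order all_algebra.
Set Implicit Arguments. Unset Strict Implicit. Unset Printing Implicit Defensive.
Import Order.TTheory GRing.Theory Num.Theory.

(* A finite multigraph: vertex type V, edge type E (both finite), and
   ends : E -> V * V giving the two (unordered) endpoints of each edge;
   a self-loop is an edge e with (ends e).1 = (ends e).2.
   The pair order in [ends e] carries no meaning for the graph itself. *)

Section Graph.
Variables (V E : finType) (ends : E -> V * V).

Definition adj : rel V :=
  fun u v => [exists e, (ends e == (u, v)) || (ends e == (v, u))].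

Definition ncomp : nat := n_comp adj [pred x : V | true].

Definition osrc (o : E -> bool) (e : E) : V := if o e then (ends e).1 else (ends e).2.
Definition otgt (o : E -> bool) (e : E) : V := if o e then (ends e).2 else (ends e).1.

Definition cyc_steps (es : seq E) (vs : seq V) : seq (E * (V * V)) :=
  zip es (zip vs (rot 1 vs)).

(* A simple cycle: a closed sequence of k >= 1 distinct edges es through
   k distinct vertices vs, edge e_i joining v_i and v_(i+1 mod k)
   (k = 1 is a self-loop). *)
Definition simple_cycle (es : seq E) (vs : seq V) : Prop :=
  [/\ 0 < size es, size vs = size es, uniq es, uniq vs &
      all (fun t : E * (V * V) =>
             (ends t.1 == (t.2.1, t.2.2)) || (ends t.1 == (t.2.2, t.2.1)))
          (cyc_steps es vs)].

Definition directed_cycle (o : E -> bool) (es : seq E) (vs : seq V) : Prop :=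
  all (fun t : E * (V * V) => (osrc o t.1 == t.2.1) && (otgt o t.1 == t.2.2))
      (cyc_steps es vs).

Definition conserved (R : nmodType) (o : E -> bool) (f : E -> R) : Prop :=
  forall v : V, (\sum_(e | otgt o e == v) f e)%R = (\sum_(e | osrc o e == v) f e)%R.
End Graph.

From HB Require Import structures.
From mathcomp Require Import all_boot all_order all_algebra.
From mathcomp Require Import zify.
Import Order.TTheory GRing.Theory Num.Theory.

Set Implicit Arguments. Unset Strict Implicit. Unset Printing Implicit Defensive.

(* Take a rooted spanning forest in which every edge joins a vertex to one of
   its ancestors (a normal, or depth-first, forest).  It exists because
   re-hanging the subtree of an endpoint below the other endpoint of an edge
   joining incomparable vertices strictly increases the total depth, which is
   bounded by #|V|^2.  Orient tree edges towards the roots and every other edge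
   from the ancestor down to the descendant: each non-tree edge then closes a
   directed cycle with the tree path back up.  These L fundamental cycles each
   contain exactly one non-tree edge, whence their independence.  Subtracting
   from a conserved flow the cycles weighted by its values on the non-tree
   edges leaves a conserved flow supported on the forest, which vanishes: at
   the deepest vertices the parent edge is the only edge carrying flow.  There
   are #|V| - c tree edges, one per non-root vertex, so L non-tree edges. *)

Lemma mkseq_cons (T : Type) (f : nat -> T) n : mkseq f n.+1 = f 0 :: mkseq (f \o succn) n.
Proof. by rewrite /mkseq /= (iotaDl 1 0) -map_comp. Qed.

Lemma row_free_unit_submx (R : fieldType) m n (A : 'M[R]_(m, n)) (c : 'I_m -> 'I_n) :
  (forall i j, A i (c j) = (i == j)%:R)%R -> row_free A.
Proof.
move=> Ac; apply/row_freeP; exists (\matrix_(k, j) (k == c j)%:R)%R.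
apply/matrixP => i j; rewrite !mxE (bigD1 (c j)) //= mxE eqxx mulr1 Ac.
by rewrite big1 ?addr0 // => k /negbTE nk; rewrite mxE nk mulr0.
Qed.

Section Graph.
Variables (V E : finType) (ends : E -> V * V).

Local Notation adj := (adj ends).
Local Notation osrc := (osrc ends).
Local Notation otgt := (otgt ends).

Lemma adj_sym : symmetric adj.
Proof. by move=> u v; apply/existsP/existsP => -[e He]; exists e; rewrite orbC. Qed.

Lemma ends_oriented o e :
  (ends e == (osrc o e, otgt o e)) || (ends e == (otgt o e, osrc o e)).
Proof. by rewrite /osrc /otgt; case: (o e); rewrite -surjective_pairing eqxx ?orbT. Qed.

Lemma sum_indicator (R : pzSemiRingType) (P : pred E) (s : seq E) : uniq s ->
  (\sum_(e | P e) (if e \in s then 1 else 0 : R) = (count P s)%:R)%R.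
Proof.
move=> s_uniq; rewrite -big_mkcondr sumr_const.
rewrite -size_filter -(card_uniqP _) ?filter_uniq //.
by congr (_ *+ _)%R; apply: eq_card => x; rewrite mem_filter.
Qed.

(* Both sides count the occurrences of v in the vertex list, once as heads and
   once (rotated) as tails of the steps. *)
Lemma directed_cycle_conserved (R : pzSemiRingType) o es vs :
  simple_cycle ends es vs -> directed_cycle ends o es vs ->
  conserved ends o (fun e => if e \in es then 1 else 0 : R)%R.
Proof.
move=> [_ size_vs es_uniq _ _] /allP dir v; rewrite !sum_indicator //.
congr (_ *+ _)%R; set S := cyc_steps es vs.
have size_S : size vs = size (rot 1 vs) by rewrite size_rot.
have -> : es = unzip1 S by rewrite unzip1_zip // size_zip -size_S minnn size_vs.
have tails : unzip2 (unzip2 S) = rot 1 vs.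
  by rewrite !unzip2_zip // ?size_zip -size_S ?minnn size_vs.
have heads : unzip1 (unzip2 S) = vs.
  by rewrite unzip2_zip ?unzip1_zip // ?size_zip -size_S ?minnn size_vs.
rewrite !count_map; transitivity (count (pred1 v) (rot 1 vs)).
  rewrite -tails !count_map; apply: eq_in_count => t /dir /andP[_ /eqP h].
  by rewrite /= h.
have /permP -> : perm_eq (rot 1 vs) vs by rewrite perm_rot.
rewrite -heads !count_map.
by apply: eq_in_count => t /dir /andP[/eqP h _]; rewrite /= h.
Qed.

Definition rooted_forest (p : V -> V) (d : V -> nat) : Prop :=
  forall v, if d v == 0 then p v = v else d v = (d (p v)).+1 /\ adj v (p v).

Definition ancestor (p : V -> V) (d : V -> nat) (y w : V) : bool :=
  (d y <= d w) && (iter (d w - d y) p w == y).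

Section Ancestor.
Variables (p : V -> V) (d : V -> nat).

Lemma ancestor_refl y : ancestor p d y y.
Proof. by rewrite /ancestor leqnn subnn /=. Qed.

Lemma ancestor_depth y w : ancestor p d y w -> d y <= d w.
Proof. by case/andP. Qed.

Lemma ancestor_iter y w : ancestor p d y w -> iter (d w - d y) p w = y.
Proof. by case/andP => _ /eqP. Qed.

Lemma ancestor_eq_depth y w : ancestor p d y w -> d y = d w -> y = w.
Proof. by move=> anc eq_d; rewrite -(ancestor_iter anc) eq_d subnn. Qed.

Definition forest_root v := iter (d v) p v.

Lemma ancestor_forest_root y w : ancestor p d y w -> forest_root y = forest_root w.
Proof.
move=> anc; rewrite /forest_root -[in RHS](subnKC (ancestor_depth anc)) iterD.
by rewrite ancestor_iter.
Qed.

End Ancestor.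

Lemma conservedB (R : zmodType) o (f g : E -> R) :
  conserved ends o f -> conserved ends o g -> conserved ends o (fun e => f e - g e)%R.
Proof. by move=> f_cons g_cons v; rewrite !sumrB f_cons g_cons. Qed.

Lemma conserved_sum (R : nmodType) o (I : finType) (P : pred I) (F : I -> E -> R) :
  (forall j, P j -> conserved ends o (F j)) ->
  conserved ends o (fun e => \sum_(j | P j) F j e)%R.
Proof.
move=> F_cons v; rewrite exchange_big [RHS]exchange_big /=.
by apply: eq_bigr => j /F_cons.
Qed.

Lemma conservedMr (R : pzSemiRingType) o (g : E -> R) c :
  conserved ends o g -> conserved ends o (fun e => g e * c)%R.
Proof. by move=> g_cons v; rewrite -!mulr_suml g_cons. Qed.

Section RootedForest.
Variables (p : V -> V) (d : V -> nat).
Hypothesis forest_pd : rooted_forest p d.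

Lemma depth_parent v : 0 < d v -> d v = (d (p v)).+1.
Proof. by move=> v_pos; move: (forest_pd v); case: eqP => [|_ []//]; lia. Qed.

Lemma adj_parent v : 0 < d v -> adj v (p v).
Proof. by move=> v_pos; move: (forest_pd v); case: eqP => [|_ []//]; lia. Qed.

Lemma parent_root v : d v = 0 -> p v = v.
Proof. by move=> dv0; move: (forest_pd v); rewrite dv0. Qed.

Lemma depth_iter k v : d (iter k p v) = d v - k.
Proof.
elim: k => [|k IH]; first by rewrite subn0.
rewrite iterS; have [dk0|dk_pos] := posnP (d (iter k p v)).
  by rewrite parent_root //; lia.
by move: (depth_parent dk_pos); lia.
Qed.

Lemma depth_lt_card v : d v < #|V|.
Proof.
pose f (k : 'I_(d v).+1) := iter k p v.
have f_inj : injective f.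
  move=> i j /(congr1 d); rewrite !depth_iter => eq_d.
  by apply: val_inj; move: (ltn_ord i) (ltn_ord j) => /=; lia.
by have := leq_card f f_inj; rewrite card_ord.
Qed.

Lemma depth_sum_bound : \sum_v d v <= #|V| * #|V|.
Proof.
rewrite -sum_nat_const; apply: leq_sum => v _.
exact/ltnW/depth_lt_card.
Qed.

Lemma ancestor_parent y w : 0 < d w ->
  ancestor p d y w = (w == y) || ancestor p d y (p w).
Proof.
move=> w_pos; have dw := depth_parent w_pos; rewrite /ancestor dw.
have [le_y_pw|lt_pw_y] := leqP (d y) (d (p w)).
  rewrite (_ : (d (p w)).+1 - d y = (d (p w) - d y).+1); last by lia.
  rewrite iterSr (_ : d y <= (d (p w)).+1) /=; last by lia.
  by have [wy|//] := eqVneq w y; rewrite wy in le_y_pw dw; lia.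
have [->|ne_y] := eqVneq (d y) (d (p w)).+1; first by rewrite subnn leqnn orbF.
rewrite (_ : (d y <= (d (p w)).+1) = false) /= ?orbF; last by lia.
by apply/esym/eqP => wy; rewrite -wy dw eqxx in ne_y.
Qed.

Lemma depth_forest_root v : d (forest_root p d v) = 0.
Proof. by rewrite /forest_root depth_iter subnn. Qed.

Lemma connect_forest_root v : connect adj v (forest_root p d v).
Proof.
have [n] := ubnP (d v); elim: n v => // n IH v; rewrite ltnS => dv_le.
have [dv0|v_pos] := posnP (d v); first by rewrite /forest_root dv0 connect0.
apply: connect_trans (connect1 (adj_parent v_pos)) _.
rewrite /forest_root (depth_parent v_pos) iterSr.
by apply: IH; move: (depth_parent v_pos); lia.
Qed.

End RootedForest.

Section Rehang.
Variables (p : V -> V) (d : V -> nat) (x y : V).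
Hypotheses (forest_pd : rooted_forest p d) (adj_xy : adj x y).
Hypotheses (not_anc_yx : ~~ ancestor p d y x) (le_yx : d y <= d x).

(* Move the subtree of y below x; descendants of y sink by d x + 1 - d y. *)
Definition rehang_parent w := if w == y then x else p w.
Definition rehang_depth w := if ancestor p d y w then d w - d y + d x + 1 else d w.

Lemma rehang_forest : rooted_forest rehang_parent rehang_depth.
Proof.
move=> w; rewrite /rehang_parent /rehang_depth.
have [->|wy] := eqVneq w y; rewrite /=.
  rewrite ancestor_refl (negbTE not_anc_yx) addn1 /=.
  by split; [lia | rewrite adj_sym].
have [anc_w|not_anc_w] := boolP (ancestor p d y w); rewrite /=.
  have lt_yw : d y < d w.
    rewrite ltn_neqAle (ancestor_depth anc_w) andbT.
    by apply/eqP => /(ancestor_eq_depth anc_w) yw; rewrite yw eqxx in wy.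
  have w_pos : 0 < d w by lia.
  have anc_pw : ancestor p d y (p w) by move: anc_w; rewrite ancestor_parent // (negbTE wy).
  rewrite anc_pw !addn1 /= (adj_parent forest_pd w_pos); split => //.
  by move: (depth_parent forest_pd w_pos) (ancestor_depth anc_pw); lia.
have [dw0|w_pos] := posnP (d w); first exact: (parent_root forest_pd dw0).
have not_anc_pw : ~~ ancestor p d y (p w).
  by move: not_anc_w; rewrite ancestor_parent // (negbTE wy).
rewrite (negbTE not_anc_pw); split; first exact: (depth_parent forest_pd w_pos).
exact: (adj_parent forest_pd w_pos).
Qed.

Lemma rehang_depth_sum : \sum_v d v < \sum_v rehang_depth v.
Proof.
rewrite (bigD1 y) //= [X in _ < X](bigD1 y) //= -addSn.
apply: leq_add; first by rewrite /rehang_depth ancestor_refl; lia.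
by apply: leq_sum => w _; rewrite /rehang_depth; case: ifP => // /ancestor_depth; lia.
Qed.

End Rehang.

Definition normal_forest p d :=
  [forall e, ancestor p d (ends e).1 (ends e).2 || ancestor p d (ends e).2 (ends e).1].

Lemma deeper_forest p d : rooted_forest p d -> ~~ normal_forest p d ->
  exists p' d', rooted_forest p' d' /\ \sum_v d v < \sum_v d' v.
Proof.
move=> forest_pd /forallPn[e]; rewrite negb_or => /andP[not_anc12 not_anc21].
have adj12 : adj (ends e).1 (ends e).2.
  by apply/existsP; exists e; rewrite -surjective_pairing eqxx.
have [le21|/ltnW le12] := leqP (d (ends e).2) (d (ends e).1).
  exists (rehang_parent p (ends e).1 (ends e).2), (rehang_depth p d (ends e).1 (ends e).2).
  by split; [apply: rehang_forest | apply: rehang_depth_sum].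
have adj21 : adj (ends e).2 (ends e).1 by rewrite adj_sym.
exists (rehang_parent p (ends e).2 (ends e).1), (rehang_depth p d (ends e).2 (ends e).1).
by split; [apply: rehang_forest | apply: rehang_depth_sum].
Qed.

Lemma exists_normal_forest : exists p d, rooted_forest p d /\ normal_forest p d.
Proof.
suff /(_ id (fun=> 0) (fun=> erefl)) : forall p d, rooted_forest p d ->
  exists p d, rooted_forest p d /\ normal_forest p d by [].
move=> p d; have [n] := ubnP (#|V| * #|V| - \sum_v d v).
elim: n p d => // n IH p d lt_n forest_pd.
have [normal_pd|/(deeper_forest forest_pd)[p' [d' [forest' lt_sum]]]] :=
  boolP (normal_forest p d); first by exists p, d.
by apply: (IH p' d') => //; move: (depth_sum_bound forest') lt_n; lia.
Qed.

Section NormalForest.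
Variables (p : V -> V) (d : V -> nat).
Hypotheses (forest_pd : rooted_forest p d) (normal_pd : normal_forest p d).

Definition parent_edge v : option E :=
  [pick e | (ends e == (v, p v)) || (ends e == (p v, v))].

Lemma parent_edgeP v : 0 < d v ->
  exists2 t, parent_edge v = Some t & (ends t == (v, p v)) || (ends t == (p v, v)).
Proof.
move=> /(adj_parent forest_pd) /existsP[e joins_e].
by rewrite /parent_edge; case: pickP => [t|/(_ e)]; [exists t | rewrite joins_e].
Qed.

Lemma parent_edge_inj u v : 0 < d u -> 0 < d v -> parent_edge u = parent_edge v -> u = v.
Proof.
move=> u_pos v_pos; have [t -> joins_u] := parent_edgeP u_pos.
have [t' -> joins_v [eq_t]] := parent_edgeP v_pos; rewrite -{t'}eq_t in joins_v.
have du := depth_parent forest_pd u_pos; have dv := depth_parent forest_pd v_pos.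
case/orP: joins_u => /eqP ends_t; case/orP: joins_v; rewrite ends_t => /eqP[uv pupv] //.
- by move: du dv; rewrite pupv -uv; lia.
- by move: du dv; rewrite uv -pupv; lia.
Qed.

Definition tree_edge e := [exists v, (0 < d v) && (parent_edge v == Some e)].

Lemma tree_edgeP e : reflect (exists2 v, 0 < d v & parent_edge v = Some e) (tree_edge e).
Proof.
apply: (iffP existsP) => -[v]; first by case/andP => v_pos /eqP; exists v.
by move=> v_pos pe_v; exists v; rewrite v_pos pe_v eqxx.
Qed.

Definition forest_orientation e :=
  if tree_edge e then d (ends e).2 < d (ends e).1 else d (ends e).1 <= d (ends e).2.

Local Notation o := forest_orientation.

Lemma tree_edge_oriented v t : 0 < d v -> parent_edge v = Some t ->
  osrc o t = v /\ otgt o t = p v.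
Proof.
move=> v_pos pe_v; have [t' ] := parent_edgeP v_pos; rewrite pe_v => -[<-] joins_t.
have tree_t : tree_edge t by apply/tree_edgeP; exists v.
have dv := depth_parent forest_pd v_pos.
rewrite /osrc /otgt /o tree_t; case/orP: joins_t => /eqP -> /=.
  by rewrite dv ltnSn.
by rewrite dv ltnNge leqnSn.
Qed.

Lemma nontree_edge_ancestor e : ~~ tree_edge e -> ancestor p d (osrc o e) (otgt o e).
Proof.
move=> nontree_e; move/forallP: normal_pd => /(_ e).
rewrite /osrc /otgt /o (negbTE nontree_e); case: ifP => le12 /orP[] // anc.
  have eq_d : d (ends e).2 = d (ends e).1 by move: (ancestor_depth anc); lia.
  by rewrite (ancestor_eq_depth anc eq_d) ancestor_refl.
by move: (ancestor_depth anc) le12; lia.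
Qed.

Section FundamentalCycle.
Variable e : E.
Hypothesis nontree_e : ~~ tree_edge e.

(* The cycle runs from a := osrc e along e down to w := otgt e, then climbs
   the k = d w - d a parent edges from w back to its ancestor a. *)
Let a := osrc o e.
Let w := otgt o e.
Let k := d w - d a.
Let P i := iter i p w.
Let pedge v := odflt e (parent_edge v).

Definition fundamental_edges := e :: mkseq (fun i => pedge (P i)) k.
Definition fundamental_vertices := P k :: mkseq P k.

Lemma path_end : P k = a.
Proof. exact: ancestor_iter (nontree_edge_ancestor nontree_e). Qed.

Lemma path_vertex_inj i j : i <= k -> j <= k -> P i = P j -> i = j.
Proof. by rewrite /P /k => le_ik le_jk /(congr1 d); rewrite !(depth_iter forest_pd); lia. Qed.

Lemma path_vertex_pos i : i < k -> 0 < d (P i).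
Proof. by rewrite /P (depth_iter forest_pd) /k; lia. Qed.

Lemma path_parent_edge i : i < k -> parent_edge (P i) = Some (pedge (P i)).
Proof. by move=> /path_vertex_pos /parent_edgeP[t pe_t _]; rewrite /pedge pe_t. Qed.

Lemma path_edge_tree e' : e' \in mkseq (fun i => pedge (P i)) k -> tree_edge e'.
Proof.
case/mapP => i; rewrite mem_iota add0n => /= lt_ik ->.
by apply/tree_edgeP; exists (P i); rewrite ?path_vertex_pos ?path_parent_edge.
Qed.

Lemma fundamental_edges_nontree e' : ~~ tree_edge e' ->
  (e' \in fundamental_edges) = (e' == e).
Proof.
move=> nontree_e'; rewrite inE; case: eqP => //= _.
by apply/negP => /path_edge_tree; apply/negP.
Qed.

Lemma fundamental_steps : cyc_steps fundamental_edges fundamental_vertices =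
  (e, (a, w)) :: mkseq (fun i => (pedge (P i), (P i, P i.+1))) k.
Proof.
rewrite /cyc_steps /fundamental_edges /fundamental_vertices rot1_cons -mkseqS.
by rewrite mkseq_cons path_end /= /mkseq !zip_map.
Qed.

Lemma fundamental_directed : directed_cycle ends o fundamental_edges fundamental_vertices.
Proof.
rewrite /directed_cycle fundamental_steps /= !eqxx /= /mkseq all_map.
apply/allP => i; rewrite mem_iota add0n /= => lt_ik.
have [-> ->] := tree_edge_oriented (path_vertex_pos lt_ik) (path_parent_edge lt_ik).
by rewrite !eqxx.
Qed.

Lemma fundamental_simple : simple_cycle ends fundamental_edges fundamental_vertices.
Proof.
split=> //; first by rewrite /= !size_mkseq.
- rewrite cons_uniq; apply/andP; split; first by apply/negP => /path_edge_tree; apply/negP.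
  apply/mkseq_uniqP => i j lt_ik lt_jk eq_e.
  have : parent_edge (P i) = parent_edge (P j) by rewrite !path_parent_edge ?eq_e.
  move/parent_edge_inj => /(_ (path_vertex_pos lt_ik) (path_vertex_pos lt_jk)).
  by apply: path_vertex_inj; exact: ltnW.
- rewrite -(rot_uniq 1) rot1_cons -mkseqS; apply/mkseq_uniqP => i j.
  by rewrite !inE !ltnS; exact: path_vertex_inj.
- move: fundamental_directed => /allP dir; apply/allP => t /dir /andP[/eqP <- /eqP <-].
  exact: ends_oriented.
Qed.

End FundamentalCycle.

(* Descending induction on depth: the edges entering v are parent edges of
   deeper vertices, so the parent edge of v is the only edge at v that may
   carry flow. *)
Lemma conserved_forest_flow_eq0 (R : nmodType) (g : E -> R) : conserved ends o g ->
  (forall e, ~~ tree_edge e -> g e = 0%R) -> forall e, g e = 0%R.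
Proof.
move=> g_cons g_nontree.
suff parent_flow0 v t : 0 < d v -> parent_edge v = Some t -> g t = 0%R.
  move=> e; have [/tree_edgeP[v v_pos]|/g_nontree //] := boolP (tree_edge e).
  exact: parent_flow0 v_pos.
have [n] := ubnP (#|V| - d v); elim: n v t => // n IH v t lt_n v_pos pe_v.
have [src_t _] := tree_edge_oriented v_pos pe_v.
have inflow0 : (\sum_(e | otgt o e == v) g e = 0)%R.
  apply: big1 => e /eqP tgt_e.
  have [/tree_edgeP[u u_pos pe_u]|/g_nontree //] := boolP (tree_edge e).
  apply: (IH u e _ u_pos pe_u); have [_ tgt_u] := tree_edge_oriented u_pos pe_u.
  move: (depth_parent forest_pd u_pos) (depth_lt_card forest_pd u) lt_n.
  by rewrite -tgt_u tgt_e; lia.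
have outflow : (\sum_(e | osrc o e == v) g e = g t)%R.
  rewrite (bigD1 t) ?src_t //= big1 ?addr0 // => e /andP[/eqP src_e ne_et].
  have [/tree_edgeP[u u_pos pe_u]|/g_nontree //] := boolP (tree_edge e).
  have [src_u _] := tree_edge_oriented u_pos pe_u.
  move: pe_u; rewrite -src_u src_e pe_v => -[eq_te].
  by rewrite eq_te eqxx in ne_et.
by rewrite -outflow -g_cons.
Qed.

Definition nontree_edges := [set e | ~~ tree_edge e].

Lemma conserved_fundamental_expansion (R : pzRingType) (f : E -> R) : conserved ends o f ->
  forall i, f i = (\sum_(e in nontree_edges) (if i \in fundamental_edges e then 1 else 0) * f e)%R.
Proof.
move=> f_cons i; apply/eqP; rewrite -subr_eq0; apply/eqP; move: i.
apply: conserved_forest_flow_eq0 => [|i nontree_i].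
  apply: conservedB => //; apply: conserved_sum => e; rewrite inE => nontree_e.
  apply: conservedMr; apply: directed_cycle_conserved.
  - exact: fundamental_simple.
  - exact: fundamental_directed.
rewrite (bigD1 i) /=; last by rewrite inE.
rewrite fundamental_edges_nontree // eqxx mul1r.
rewrite big1 ?addr0 ?subrr // => e /andP[nontree_e ne_ei]; rewrite inE in nontree_e.
by rewrite fundamental_edges_nontree // eq_sym (negbTE ne_ei) mul0r.
Qed.

Lemma card_tree_edges : #|[set e | tree_edge e]| = #|[set v | 0 < d v]|.
Proof.
rewrite -(card_imset _ (@Some_inj _)) -(card_in_imset (f := parent_edge)); last first.
  by move=> u v; rewrite !inE; exact: parent_edge_inj.
congr #|pred_of_set _|; apply/setP => x; apply/imsetP/imsetP => -[y].
  by rewrite inE => /tree_edgeP[v v_pos pe_v] ->; exists v; rewrite ?inE.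
rewrite inE => y_pos ->; have [e pe_y _] := parent_edgeP y_pos.
by rewrite pe_y; exists e => //; rewrite inE; apply/tree_edgeP; exists y.
Qed.

Lemma forest_root_connect x y : connect adj x y -> forest_root p d x = forest_root p d y.
Proof.
case/connectP => s; elim: s x => [|z s IH] x /=; first by move=> _ ->.
move=> /andP[/existsP[e ends_e] path_zs] /(IH _ path_zs) <-.
move/forallP: normal_pd => /(_ e).
by case/orP: ends_e => /eqP ->; case/orP => /ancestor_forest_root /= ->.
Qed.

Lemma card_roots : #|[set v | d v == 0]| = ncomp ends.
Proof.
have adj_csym : connect_sym adj := sym_connect_sym adj_sym.
have root_fixed r : d r = 0 -> forest_root p d r = r by rewrite /forest_root => ->.
rewrite /ncomp -(card_in_imset (f := fingraph.root adj)); last first.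
  move=> r1 r2; rewrite !inE => /eqP r1_root /eqP r2_root /(fingraph.rootP adj_csym).
  by move/forest_root_connect; rewrite !root_fixed.
apply: eq_card => x; rewrite !inE andbT; apply/imsetP/idP => [[r _ ->]|/eqP x_root].
  exact: fingraph.roots_root.
exists (forest_root p d x); first by rewrite inE depth_forest_root.
by rewrite -{1}x_root; apply/(fingraph.rootP adj_csym); exact: connect_forest_root.
Qed.

Lemma card_nontree_edges : #|nontree_edges| = (#|E| + ncomp ends - #|V|)%N.
Proof.
have card_E := cardsC [set e | tree_edge e].
have card_V := cardsC [set v | 0 < d v].
have -> : nontree_edges = ~: [set e | tree_edge e] by apply/setP => e; rewrite !inE.
have roots_compl : ~: [set v | 0 < d v] = [set v | d v == 0].
  by apply/setP => v; rewrite !inE lt0n negbK.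
by rewrite roots_compl card_roots -card_tree_edges in card_V; lia.
Qed.

End NormalForest.
End Graph.

Local Open Scope ring_scope.

Theorem proposition1 (R : realFieldType) (V E : finType) (ends : E -> V * V) :
  let L := (#|E| + ncomp ends - #|V|)%N in
  exists (o : E -> bool) (gamma : 'I_L -> seq E * seq V),
    [/\ (forall j, simple_cycle ends (gamma j).1 (gamma j).2),
        (forall j, directed_cycle ends o (gamma j).1 (gamma j).2),
        (* edge-indicator vectors of gamma_1..gamma_L (rows) are linearly independent in R^I *)
        row_free (\matrix_(j < L, k < #|E|)
                    (if enum_val k \in (gamma j).1 then 1 else 0) : 'M[R]_(L, #|E|)) &
        (* every conserved energy flow is parametrized by loop energies e_1..e_L *)
        forall f : E -> R, conserved ends o f ->
          exists en : 'I_L -> R,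
            forall i : E, f i = \sum_(j < L) (if i \in (gamma j).1 then 1 else 0) * en j].
Proof.
move=> L; have [p [d [forest_pd normal_pd]]] := exists_normal_forest ends.
rewrite /L -(card_nontree_edges forest_pd normal_pd).
have nontree j : ~~ tree_edge ends p d (enum_val (A := nontree_edges ends p d) j).
  by have := enum_valP j; rewrite inE.
exists (forest_orientation ends p d).
exists (fun j => (fundamental_edges ends p d (enum_val j),
                  fundamental_vertices ends p d (enum_val j))).
split=> [j|j||f f_cons].
- exact: fundamental_simple.
- exact: fundamental_directed.
- apply: (row_free_unit_submx (c := fun j => enum_rank (enum_val j))) => i j.
  rewrite !mxE enum_rankK fundamental_edges_nontree // (inj_eq enum_val_inj).
  by rewrite eq_sym; case: eqP.
- exists (fun j => f (enum_val j)) => i.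
  by rewrite (conserved_fundamental_expansion forest_pd normal_pd f_cons i) big_enum_val.
Qed.
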